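(* Let $k\geq 2$ be an even integer and let $G$ be an undirected graph whose degeneracy is $k$. Then $f(G)<\frac{k}{k+2}\,n(G)$.
   Context: All graphs are finite and simple. $n(G)$ is the number of vertices and $f(G)$ is the minimum size of a feedback vertex set of $G$ (a set $F\subseteq V(G)$ with $G-F$ acyclic). An ordering $\phi$ of $V(G)$ is a $k$-elimination ordering if each vertex has at most $k$ neighbours preceding it in $\phi$; the degeneracy of $G$ is the least $k$ such that $G$ has a $k$-elimination ordering. *)

From mathcomp Require Import all_boot.
Set Implicit Arguments. Unset Strict Implicit. Unset Printing Implicit Defensive.

Definition simple_graph (T : finType) (e : rel T) : Prop :=
  symmetric e /\ irreflexive e.

Definition is_cycle (T : finType) (e : rel T) (c : seq T) : bool :=
  [&& 3 <= size c, uniq c & cycle e c].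

Definition is_fvs (T : finType) (e : rel T) (F : {set T}) : Prop :=
  forall c : seq T, is_cycle e c -> has (fun x => x \in F) c.

Definition elim_ordering (T : finType) (e : rel T) (k : nat) (phi : seq T) : Prop :=
  [/\ uniq phi, (forall x : T, x \in phi) &
      forall (s t : seq T) (x : T), phi = s ++ x :: t -> count (e x) s <= k].

Definition degeneracy_eq (T : finType) (e : rel T) (k : nat) : Prop :=
  (exists phi, elim_ordering e k phi) /\
  (forall j phi, elim_ordering e j phi -> k <= j).

Definition fvs_number_eq (T : finType) (e : rel T) (m : nat) : Prop :=
  (exists F : {set T}, is_fvs e F /\ #|F| = m) /\
  (forall F : {set T}, is_fvs e F -> m <= #|F|).

From mathcomp Require Import all_boot zify.
Set Implicit Arguments. Unset Strict Implicit. Unset Printing Implicit Defensive.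

(* Fix a k-elimination ordering and r := k/2 + 1 classes. Going along the
   ordering, put each vertex into a class containing at most one of its earlier
   neighbours. A class in which every vertex has at most one earlier neighbour
   induces a forest, as the latest vertex of a cycle has two earlier neighbours
   on it. Such a class always exists: a vertex has at most k = 2r - 2 earlier
   neighbours, and the classes are disjoint except for the first vertex, which
   is put into two classes, so the classes meet these neighbours at most 2r - 1
   times in total. The classes then have total size n + 1, so one of them has
   more than n/r vertices, and its complement is a feedback vertex set of size
   less than n(r - 1)/r = kn/(k + 2); the doubled first vertex is what makes the
   bound strict. *)

Lemma uniq_cycle_nbrs (T : eqType) (e : rel T) (c : seq T) (x : T) :
  uniq c -> 3 <= size c -> cycle e c -> x \in c ->
  exists y z, [/\ e x y, e z x, y \in c, z \in c & uniq [:: x; y; z]].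
Proof.
move=> uniq_c size_c cycle_c /rot_to[i q rot_c].
have mem_q y : y \in x :: q -> y \in c by rewrite -rot_c mem_rot.
move: uniq_c size_c cycle_c; rewrite -(rot_uniq i) -(size_rot i) -(rot_cycle i) rot_c.
case: q mem_q {rot_c} => [|y q] // mem_q; case/lastP: q mem_q => [|q z] // mem_q.
rewrite /= rcons_path last_rcons !inE !mem_rcons !inE !negb_or.
case/and3P=> /and3P[xy xz _] /andP[yz _] _ _ /and3P[exy _ ezx].
exists y, z; rewrite !inE negb_or xy xz yz; split=> //; apply: mem_q.
  by rewrite !inE eqxx orbT.
by rewrite !inE mem_rcons mem_head !orbT.
Qed.

Lemma exists_small_term (I : finType) (F : I -> nat) n :
  \sum_i F i < #|I| * n -> exists i, F i < n.
Proof.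
move=> sum_lt; suff /existsP[i] : [exists i, F i < n] by exists i.
apply: contraLR sum_lt; rewrite negb_exists -leqNgt => /forallP F_ge.
have -> : #|I| * n = \sum_(i : I) n by rewrite sum_nat_const.
by apply: leq_sum => i _; rewrite leqNgt; exact: F_ge.
Qed.

Lemma exists_large_term (I : finType) (F : I -> nat) n :
  n < \sum_i F i -> exists i, n < F i * #|I|.
Proof.
move=> sum_gt; suff /existsP[i] : [exists i, n < F i * #|I|] by exists i.
have I_gt0 : 0 < #|I|.
  by rewrite lt0n; apply: contraTneq sum_gt => /card0_eq I0; rewrite big_pred0.
apply: contraLR sum_gt; rewrite negb_exists -leqNgt => /forallP F_le.
have : \sum_i F i * #|I| <= \sum_(i : I) n.
  by apply: leq_sum => i _; rewrite leqNgt; exact: F_le.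
by rewrite -big_distrl /= sum_nat_const mulnC leq_pmul2l.
Qed.

Lemma card_setU1I (T : finType) (x : T) (A S : {set T}) :
  x \notin A -> #|(x |: A) :&: S| = (x \in S) + #|A :&: S|.
Proof. by move=> xA; rewrite (cardsD1 x) -setIDAC setU1K // !inE eqxx. Qed.

Lemma card_setID1 (T : finType) (x : T) (A S : {set T}) :
  x \notin A -> #|A :&: S| = #|A :&: (S :\ x)|.
Proof. by move=> xA; rewrite (cardsD1 x) inE (negbTE xA) setIDA. Qed.

Lemma sum_card_update (I T : finType) (A : I -> {set T}) i0 x (S : {set T}) :
  (forall i, x \notin A i) ->
  \sum_i #|(if i == i0 then x |: A i else A i) :&: S| =
    (x \in S) + \sum_i #|A i :&: S|.
Proof.
move=> xA; rewrite (bigD1 i0) //= [in RHS](bigD1 i0) //= eqxx card_setU1I // -!addnA.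
by congr (_ + (_ + _)); apply: eq_bigr => i /negbTE->.
Qed.

Lemma sum_cardIT (I T : finType) (A : I -> {set T}) :
  \sum_i #|A i :&: setT| = \sum_i #|A i|.
Proof. by apply: eq_bigr => i _; rewrite setIT. Qed.

Section EarlierNeighbours.

Variables (T : finType) (e : rel T) (phi : seq T).

Definition earlier_nbrs (x : T) : {set T} :=
  [set y | e x y & index y phi < index x phi].

Definition ordered_forest (A : {set T}) : Prop :=
  forall x, x \in A -> #|A :&: earlier_nbrs x| <= 1.

Lemma card_earlier_nbrs k : elim_ordering e k phi -> forall x, #|earlier_nbrs x| <= k.
Proof.
case=> _ phi_full count_le x; set i := index x phi.
have phi_split : phi = take i phi ++ x :: drop i.+1 phi.
  by rewrite -{1}(cat_take_drop i phi) (drop_nth x) ?index_mem ?nth_index.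
apply: leq_trans (count_le _ _ _ phi_split).
rewrite -size_filter; apply: leq_trans (card_size _).
apply/subset_leq_card/subsetP => y; rewrite !inE mem_filter in_take //.
Qed.

Lemma ordered_forest_setU1 A x :
  ordered_forest A -> {in A, forall y, index y phi < index x phi} ->
  #|A :&: earlier_nbrs x| <= 1 -> ordered_forest (x |: A).
Proof.
move=> forest_A earlier_A card_x y; rewrite !inE => /predU1P[->|yA].
  apply: leq_trans card_x; apply/subset_leq_card/subsetP => z.
  by rewrite !inE => /andP[/predU1P[->|->]]; rewrite ?ltnn ?andbF.
apply: leq_trans (forest_A y yA); apply/subset_leq_card/subsetP => z.
rewrite !inE => /andP[/predU1P[->|->]] // /andP[_].
by rewrite ltnNge ltnW ?earlier_A.
Qed.

Lemma ordered_forest_fvsC A :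
  symmetric e -> (forall x, x \in phi) -> ordered_forest A -> is_fvs e (~: A).
Proof.
move=> sym_e phi_full forest_A c /and3P[size_c uniq_c cycle_c].
apply/hasPn => c_in_A; have {}c_in_A y : y \in c -> y \in A.
  by move=> /c_in_A; rewrite inE negbK.
case: c size_c uniq_c cycle_c c_in_A => // x0 c' size_c uniq_c cycle_c c_in_A.
have [x xc x_max] := arg_maxnP (fun y => index y phi) (mem_head x0 c').
have nbr_x y : y \in x0 :: c' -> y != x -> e x y -> y \in A :&: earlier_nbrs x.
  move=> yc yx exy; rewrite !inE c_in_A // exy ltn_neqAle (x_max y yc : _ <= _).
  by rewrite andbT; apply: contra yx => /eqP/index_inj->.
have [y [z [exy ezx yc zc]]] := uniq_cycle_nbrs uniq_c size_c cycle_c xc.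
rewrite /= !inE !negb_or andbT => /andP[/andP[xy xz] yz].
have := forest_A x (c_in_A x xc); apply/negP; rewrite -ltnNge.
apply: leq_trans (_ : #|[set y; z]| <= _); first by rewrite cards2 yz.
apply/subset_leq_card/subsetP => w /set2P[]->; apply: nbr_x; rewrite 1?eq_sym //.
by rewrite sym_e.
Qed.

End EarlierNeighbours.

Section GreedyForestCover.

Variables (T : finType) (e : rel T) (phi : seq T) (I : finType) (k : nat).
Hypotheses (uniq_phi : uniq phi) (I_gt1 : 1 < #|I|) (k_le : k.+2 <= #|I|.*2).
Hypothesis earlier_nbrs_le : forall x, #|earlier_nbrs e phi x| <= k.

(* The classes [A i] are ordered forests within the first [p] vertices of [phi],
   pairwise disjoint up to a single vertex lying in two of them (this is what the
   bound on [S] encodes), and of total size at least [p + 1]. *)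
Definition forest_cover (p : nat) (A : I -> {set T}) : Prop :=
  [/\ forall i, {in A i, forall y, index y phi < p},
      forall S : {set T}, \sum_i #|A i :&: S| <= #|S| + 1,
      forall i, ordered_forest e phi (A i)
    & p < \sum_i #|A i|].

Lemma forest_cover1 : 0 < size phi -> exists A, forest_cover 1 A.
Proof.
case phi_x: phi => [|x s] // _; have ix : index x phi = 0 by rewrite phi_x /= eqxx.
have [i0 [i1 [_ _ i01]]] := card_gt1P I_gt1.
pose A i := if i \in [set i0; i1] then [set x] else set0.
have sum_A S : \sum_i #|A i :&: S| = (x \in S).*2.
  pose xS : nat := x \in S.
  rewrite (eq_bigr (fun i => if i \in [set i0; i1] then xS else 0)); last first.
    move=> i _; rewrite /A; case: ifP => _; last by rewrite set0I cards0.
    by rewrite -[[set x]]setU0 card_setU1I ?inE // set0I cards0 addn0.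
  by rewrite -big_mkcond sum_nat_const cards2 i01 mul2n.
exists A; split.
- by move=> i y; rewrite /A; case: ifP => _; rewrite inE // => /eqP->; rewrite ix.
- by move=> S; rewrite sum_A (cardsD1 x S); case: (x \in S) => /=; lia.
- move=> i y; rewrite /A; case: ifP => _; rewrite ?inE // => /eqP->.
  by rewrite (leq_trans (subset_leq_card (subsetIl _ _))) ?cards1.
- by rewrite -sum_cardIT sum_A inE.
Qed.

Lemma forest_coverS p A :
  p < size phi -> forest_cover p A -> exists A', forest_cover p.+1 A'.
Proof.
move=> lt_p [A_lt sum_A forest_A size_A].
have [x ix] : exists x, index x phi = p.
  case phi_x0: phi => [|x0 s]; first by rewrite phi_x0 in lt_p.
  by exists (nth x0 phi p); rewrite -phi_x0 index_uniq.
have x_new i : x \notin A i by apply/negP => /A_lt; rewrite ix ltnn.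
have [i0 small_i0] : exists i0, #|A i0 :&: earlier_nbrs e phi x| < 2.
  apply: exists_small_term; apply: leq_ltn_trans (sum_A _) _.
  by move: (earlier_nbrs_le x) k_le; lia.
exists (fun i => if i == i0 then x |: A i else A i); split.
- move=> i y; case: eqP => _; last by move/A_lt/leqW.
  by rewrite !inE => /predU1P[->|/A_lt/leqW //]; rewrite ix.
- move=> S; rewrite sum_card_update // (eq_bigr _ (fun i _ => card_setID1 S (x_new i))).
  by have := sum_A (S :\ x); rewrite (cardsD1 x S); case: (x \in S) => /=; lia.
- move=> i; case: eqP => [->|_]; last exact: forest_A.
  by apply: ordered_forest_setU1 => // y /A_lt; rewrite ix.
- by rewrite -sum_cardIT sum_card_update // sum_cardIT in_setT.
Qed.

Lemma exists_forest_cover : 0 < size phi -> exists A, forest_cover (size phi) A.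
Proof.
suff cover p : 0 < p <= size phi -> exists A, forest_cover p A.
  by move=> phi_gt0; apply: cover; rewrite phi_gt0 leqnn.
elim: p => [//|[|p] IH] /andP[_ le_p]; first exact: forest_cover1.
by have [A coverA] := IH (ltnW le_p); exact: forest_coverS coverA.
Qed.

End GreedyForestCover.

Theorem mainTheorem2 (T : finType) (e : rel T) (k : nat) :
  simple_graph e -> 2 <= k -> ~~ odd k -> degeneracy_eq e k ->
  forall m : nat, fvs_number_eq e m -> m * (k + 2) < k * #|T|.
Proof.
move=> [sym_e _] k_ge2 k_even [[phi ord_phi] min_k] m [_ min_fvs].
have [uniq_phi phi_full _] := ord_phi.
have card_T : #|T| = size phi.
  by rewrite -(card_uniqP uniq_phi); apply: eq_card => x; rewrite phi_full.
have phi_gt0 : 0 < size phi.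
  rewrite lt0n size_eq0; apply: contraTneq k_ge2 => phi_nil.
  have /min_k : elim_ordering e 0 phi by split=> // s t x; rewrite phi_nil; case: s.
  by rewrite leqn0 => /eqP->.
have k_half : k = (k./2).*2 by rewrite -[k in LHS]odd_double_half (negbTE k_even).
have card_classes_gt1 : 1 < #|'I_(k./2).+1| by rewrite card_ord ltnS half_gt0.
have k_le : k.+2 <= #|'I_(k./2).+1|.*2 by rewrite card_ord doubleS -k_half.
have [A [_ _ forest_A size_A]] :=
  exists_forest_cover uniq_phi card_classes_gt1 k_le (card_earlier_nbrs ord_phi) phi_gt0.
have [i big_Ai] := exists_large_term size_A.
have := min_fvs _ (ordered_forest_fvsC sym_e phi_full (forest_A i)).
rewrite [#|~: _|]cardsCs setCK; have := max_card (A i).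
rewrite card_ord card_T in big_Ai *; rewrite k_half; nia.
Qed.
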